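(* Let $A\subseteq\omega$ be a c.e. set such that $\overline{\rho}(A)$ is a $\Delta^0_2$ real. Then $A$ has a computable subset $B$ such that $\overline{\rho}(B)=\overline{\rho}(A)$, and hence $d(A,B)=0$.
   Context: For $S\subseteq\omega$ and $n>0$, $\rho_n(S)=|S\cap[0,n)|/n$; $\overline{\rho}(S)=\limsup_n\rho_n(S)$ and $\underline{\rho}(S)=\liminf_n\rho_n(S)$. For $A,B\subseteq\omega$, $d(A,B)=\underline{\rho}(A\triangle B)$. A real is $\Delta^0_2$ if it is the limit of a computable sequence of rationals. *)

From Stdlib Require Import Reals List Lia.
From Coquelicot Require Import Coquelicot.
Import ListNotations.
Open Scope R_scope.

Inductive PR : nat -> Type :=
| PRzero : forall k, PR k
| PRsucc : PR 1
| PRproj : forall k, nat -> PR k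
| PRcomp : forall k m, PR m -> PRs k m -> PR k
| PRrec  : forall k, PR k -> PR (S (S k)) -> PR (S k)
| PRmu   : forall k, PR (S k) -> PR k
with PRs : nat -> nat -> Type :=
| PRnil  : forall k, PRs k 0
| PRcons : forall k m, PR k -> PRs k m -> PRs k (S m).

Inductive eval : forall k, PR k -> list nat -> nat -> Prop :=
| ev_zero : forall k v, eval k (PRzero k) v 0
| ev_succ : forall v, eval 1 PRsucc v (S (hd 0%nat v))
| ev_proj : forall k i v, eval k (PRproj k i) v (nth i v 0%nat)
| ev_comp : forall k m (f : PR m) (gs : PRs k m) v ws y,
    evals k m gs v ws -> eval m f ws y -> eval k (PRcomp k m f gs) v y
| ev_rec0 : forall k g h v y,
    eval k g v y -> eval (S k) (PRrec k g h) (0%nat :: v) y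
| ev_recS : forall k g h n v z y,
    eval (S k) (PRrec k g h) (n :: v) z ->
    eval (S (S k)) h (n :: z :: v) y ->
    eval (S k) (PRrec k g h) (S n :: v) y
| ev_mu : forall k f v n,
    eval (S k) f (n :: v) 0%nat ->
    (forall m, (m < n)%nat -> exists z, eval (S k) f (m :: v) (S z)) ->
    eval k (PRmu k f) v n
with evals : forall k m, PRs k m -> list nat -> list nat -> Prop :=
| evs_nil : forall k v, evals k 0 (PRnil k) v []
| evs_cons : forall k m g gs v y ys,
    eval k g v y -> evals k m gs v ys -> evals k (S m) (PRcons k m g gs) v (y :: ys).

Definition computable_fun (f : nat -> nat) : Prop :=
  exists e : PR 1, forall n, eval 1 e [n] (f n).

Definition computable_set (B : nat -> bool) : Prop :=
  exists e : PR 1, forall n, eval 1 e [n] (if B n then 1%nat else 0%nat).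

Definition ce_set (A : nat -> bool) : Prop :=
  exists e : PR 1, forall n, A n = true <-> exists y, eval 1 e [n] y.

Definition subset (B A : nat -> bool) : Prop := forall n, B n = true -> A n = true.

Definition symdiff (A B : nat -> bool) : nat -> bool := fun n => xorb (A n) (B n).

Fixpoint count_below (S : nat -> bool) (n : nat) : nat :=
  match n with
  | O => O
  | Datatypes.S m => (count_below S m + (if S m then 1 else 0))%nat
  end.

Definition rho (S : nat -> bool) (n : nat) : R := INR (count_below S n) / INR n.

(* limsup / liminf over n > 0 (reindexed by n+1) *)
Definition upper_density (S : nat -> bool) : Rbar := LimSup_seq (fun n => rho S (Datatypes.S n)).
Definition lower_density (S : nat -> bool) : Rbar := LimInf_seq (fun n => rho S (Datatypes.S n)).

Definition dens_dist (A B : nat -> bool) : Rbar := lower_density (symdiff A B).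

Definition computable_rat_seq (q : nat -> R) : Prop :=
  exists a b c : nat -> nat,
    computable_fun a /\ computable_fun b /\ computable_fun c /\
    forall n, q n = (INR (a n) - INR (b n)) / INR (Datatypes.S (c n)).

Definition Delta02 (r : R) : Prop :=
  exists q : nat -> R, computable_rat_seq q /\ is_lim_seq q r.

From Stdlib Require Import Reals.
From Coquelicot Require Import Coquelicot.
From Stdlib Require Import List Lia Lra ClassicalEpsilon ConstructiveEpsilon.
Import ListNotations.
Local Open Scope nat_scope.

(* Let [A_s] be the part of [A] enumerated by stage [s] and [q N -> r] the
   approximations of [r].  Cut omega into consecutive blocks [[m_k, m_(k+1))] and
   let [B] agree with [A_N] on block [k], where the stage [N >= k] and the end
   [n = m_(k+1) >= (k+1)(m_k+1)] are found by unbounded search for a pair with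
   [rho_n(A_N) >= q N - 1/(k+1)].  Such a pair exists: [rho_n(A) > r - eps] for
   infinitely many [n], [A_N] agrees with [A] below [n] for large [N], and
   [q N] is close to [r].  The sets [A_s] are decided by a clocked interpreter
   for the codes, itself computable, so [B] is a computable subset of [A]; since [B]
   loses at most [m_k <= n/(k+1)] elements of [A_N] below [n], [rho_n(B)] gets
   arbitrarily close to [r] along the block ends.  This gives
   [upper_density B = r], and [rho(A \ B) = rho(A) - rho(B)] is small there too. *)

Definition recursive k (f : list nat -> nat) : Prop :=
  exists e : PR k, forall v, length v = k -> eval k e v (f v).

Definition recursive_vec k m (F : list nat -> list nat) : Prop :=
  exists es : PRs k m, forall v, length v = k -> evals k m es v (F v).

Lemma evals_length k m es v ws : evals k m es v ws -> length ws = m.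
Proof. induction 1; simpl; auto. Qed.

Lemma recursive_ext k f g :
  (forall v, length v = k -> f v = g v) -> recursive k f -> recursive k g.
Proof. intros H [e He]; exists e; intros v Hv; rewrite <- H by auto; auto. Qed.

Lemma recursive_vec_ext k m F G :
  (forall v, length v = k -> F v = G v) -> recursive_vec k m F -> recursive_vec k m G.
Proof. intros H [es Hes]; exists es; intros v Hv; rewrite <- H by auto; auto. Qed.

Lemma recursive_zero k : recursive k (fun _ => 0).
Proof. exists (PRzero k); intros; constructor. Qed.

Lemma recursive_proj k i : recursive k (fun v => nth i v 0).
Proof. exists (PRproj k i); intros; constructor. Qed.

Lemma recursive_hd k : recursive k (fun v => hd 0 v).
Proof. eapply recursive_ext; [|apply (recursive_proj k 0)]. intros [|] _; reflexivity. Qed.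

Lemma recursive_vec_nil k : recursive_vec k 0 (fun _ => []).
Proof. exists (PRnil k); intros; constructor. Qed.

Lemma recursive_vec_cons k m f F :
  recursive k f -> recursive_vec k m F -> recursive_vec k (S m) (fun v => f v :: F v).
Proof. intros [e He] [es Hes]; exists (PRcons k m e es); intros; constructor; auto. Qed.

Lemma recursive_comp k m f G :
  recursive m f -> recursive_vec k m G -> recursive k (fun v => f (G v)).
Proof.
  intros [e He] [es Hes]; exists (PRcomp k m e es); intros v Hv.
  econstructor; eauto. apply He. eapply evals_length; eauto.
Qed.

Lemma recursive_comp1 k f g :
  recursive 1 f -> recursive k g -> recursive k (fun v => f [g v]).
Proof.
  intros Hf Hg. apply (recursive_comp k 1 f (fun v => [g v])); auto.
  apply recursive_vec_cons; auto. apply recursive_vec_nil.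
Qed.

Lemma recursive_comp2 k f g1 g2 :
  recursive 2 f -> recursive k g1 -> recursive k g2 -> recursive k (fun v => f [g1 v; g2 v]).
Proof.
  intros Hf H1 H2. apply (recursive_comp k 2 f (fun v => [g1 v; g2 v])); auto.
  repeat apply recursive_vec_cons; auto. apply recursive_vec_nil.
Qed.

Lemma recursive_primrec k g h : recursive k g -> recursive (S (S k)) h ->
  recursive (S k) (fun v => match v with
    | [] => 0
    | n :: w => nat_rec (fun _ => nat) (g w) (fun j z => h (j :: z :: w)) n end).
Proof.
  intros [eg Hg] [eh Hh]; exists (PRrec k eg eh); intros [|n w] Hv; [discriminate|].
  injection Hv; intro Hw. induction n; simpl.
  - constructor; auto.
  - econstructor; eauto. apply Hh. simpl; lia.
Qed.

Lemma recursive_mu k f : recursive (S k) f ->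
  (forall v, length v = k -> exists n, f (n :: v) = 0) ->
  exists g, recursive k g /\ forall v, length v = k -> f (g v :: v) = 0.
Proof.
  intros [e He] Hex.
  set (least v n := f (n :: v) = 0 /\ forall m, m < n -> f (m :: v) <> 0).
  exists (fun v => epsilon (inhabits 0) (least v)).
  assert (Hleast : forall v, length v = k -> least v (epsilon (inhabits 0) (least v))).
  { intros v Hv. apply epsilon_spec.
    destruct (epsilon_smallest (fun n => f (n :: v) = 0)) as [n [Hn Hmin]].
    - intros n; apply Nat.eq_dec.
    - auto.
    - exists n; split; auto. intros m Hm Hfm. specialize (Hmin m Hfm); lia. }
  split; [|intros v Hv; apply Hleast; auto].
  exists (PRmu k e). intros v Hv. destruct (Hleast v Hv) as [Hzero Hpos].
  constructor.
  - assert (Heval := He (epsilon (inhabits 0) (least v) :: v) ltac:(simpl; auto)).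
    rewrite Hzero in Heval; exact Heval.
  - intros m Hm. specialize (Hpos m Hm). destruct (f (m :: v)) as [|z] eqn:E; [congruence|].
    exists z; rewrite <- E; apply He; simpl; auto.
Qed.

Lemma recursive_S k g : recursive k g -> recursive k (fun v => S (g v)).
Proof.
  apply (recursive_comp1 k (fun l => S (hd 0 l))).
  exists PRsucc; intros [|x [|]] Hv; try discriminate; constructor.
Qed.

Lemma recursive_const k c : recursive k (fun _ => c).
Proof. induction c; [apply recursive_zero | apply (recursive_S k (fun _ => c)); auto]. Qed.

Lemma recursive_add k f g :
  recursive k f -> recursive k g -> recursive k (fun v => f v + g v).
Proof.
  apply (recursive_comp2 k (fun l => hd 0 l + nth 1 l 0)).
  eapply recursive_ext;
    [|apply (recursive_primrec 1 (fun w => nth 0 w 0) (fun u => S (nth 1 u 0)))].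
  - intros [|n [|y [|]]] Hv; try discriminate. simpl. induction n; simpl; auto.
  - apply recursive_proj.
  - apply recursive_S, recursive_proj.
Qed.

Lemma recursive_mul k f g :
  recursive k f -> recursive k g -> recursive k (fun v => f v * g v).
Proof.
  apply (recursive_comp2 k (fun l => hd 0 l * nth 1 l 0)).
  eapply recursive_ext;
    [|apply (recursive_primrec 1 (fun _ => 0) (fun u => nth 1 u 0 + nth 2 u 0))].
  - intros [|n [|y [|]]] Hv; try discriminate. simpl.
    clear Hv; induction n; simpl; auto. rewrite IHn; lia.
  - apply recursive_zero.
  - apply recursive_add; apply recursive_proj.
Qed.

Lemma recursive_pred k f : recursive k f -> recursive k (fun v => pred (f v)).
Proof.
  apply (recursive_comp1 k (fun l => pred (hd 0 l))).
  eapply recursive_ext; [|apply (recursive_primrec 0 (fun _ => 0) (fun u => nth 0 u 0))].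
  - intros [|n [|]] Hv; try discriminate. destruct n; reflexivity.
  - apply recursive_zero.
  - apply recursive_proj.
Qed.

Lemma recursive_sub k f g :
  recursive k f -> recursive k g -> recursive k (fun v => f v - g v).
Proof.
  intros Hf Hg. apply (recursive_comp2 k (fun l => nth 1 l 0 - hd 0 l)); auto.
  eapply recursive_ext;
    [|apply (recursive_primrec 1 (fun w => nth 0 w 0) (fun u => pred (nth 1 u 0)))].
  - intros [|n [|y [|]]] Hv; try discriminate. simpl.
    clear Hv; induction n; simpl; [lia|]. rewrite IHn; lia.
  - apply recursive_proj.
  - apply recursive_pred, recursive_proj.
Qed.

Lemma recursive_if0 k x a b : recursive k x -> recursive k a -> recursive k b ->
  recursive k (fun v => match x v with 0 => a v | S _ => b v end).
Proof.
  intros Hx Ha Hb.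
  eapply recursive_ext;
    [|apply (recursive_add k (fun v => a v * (1 - x v)) (fun v => b v * (1 - (1 - x v))))].
  - intros v _. cbv beta. destruct (x v); simpl; lia.
  - apply recursive_mul, recursive_sub; auto using recursive_const.
  - apply recursive_mul, recursive_sub, recursive_sub; auto using recursive_const.
Qed.

Lemma map_nth_seq_skipn (v : list nat) d :
  map (fun i => nth i v 0) (seq d (length v - d)) = skipn d v.
Proof.
  revert v. induction d; intros v.
  - rewrite Nat.sub_0_r. induction v; simpl; auto. f_equal.
    rewrite <- seq_shift, map_map. auto.
  - destruct v; simpl; auto. rewrite <- seq_shift, map_map. apply IHd.
Qed.

Lemma recursive_vec_skipn k d : recursive_vec (d + k) k (fun v => skipn d v).
Proof.
  assert (Hmap : forall idx, recursive_vec (d + k) (length idx)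
                   (fun v => map (fun i => nth i v 0) idx)).
  { induction idx; simpl; [apply recursive_vec_nil|].
    apply recursive_vec_cons; auto. apply recursive_proj. }
  specialize (Hmap (seq d k)); rewrite length_seq in Hmap.
  eapply recursive_vec_ext; [|exact Hmap]. intros v Hv.
  rewrite <- map_nth_seq_skipn. do 2 f_equal. lia.
Qed.

(* Clocked search over [F 0, F 1, ...], where [F j] is a clocked value: [0] = no
   answer yet, [1] = halted with 0, [S (S _)] = halted with a positive value.
   The accumulator is [1] while searching, [0] once stuck on an unfinished
   value, and [S (S j)] once [j] is found. *)
Definition mu_step (F : nat -> nat) (j acc : nat) : nat :=
  match acc with
  | 1 => match F j with 0 => 0 | 1 => S (S j) | _ => 1 end
  | _ => acc
  end.

Definition mu_search (F : nat -> nat) (n : nat) : nat :=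
  nat_rec (fun _ => nat) 1 (fun j acc => mu_step F j acc) n.

Lemma mu_search_cases F n :
  (mu_search F n = 1 /\ forall i, i < n -> 2 <= F i) \/
  (exists m, m < n /\ F m <= 1 /\ (forall i, i < m -> 2 <= F i) /\
     mu_search F n = match F m with 0 => 0 | _ => S (S m) end).
Proof.
  induction n as [|n [[Hsearch Hall]|[m [Hm [HFm [Hall Hsearch]]]]]].
  - left; split; [reflexivity | intros; lia].
  - change (mu_search F (S n)) with (mu_step F n (mu_search F n)).
    rewrite Hsearch; unfold mu_step.
    destruct (F n) as [|[|z]] eqn:EF.
    + right; exists n; rewrite EF; repeat split; auto; lia.
    + right; exists n; rewrite EF; repeat split; auto; lia.
    + left; split; [reflexivity|]. intros i Hi.
      destruct (Nat.eq_dec i n); [subst; lia | apply Hall; lia].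
  - right; exists m; split; [lia|]; split; [auto|]; split; [auto|].
    change (mu_search F (S n)) with (mu_step F n (mu_search F n)).
    rewrite Hsearch; unfold mu_step.
    destruct (F m) as [|[|z]]; reflexivity || lia.
Qed.

Lemma mu_search_found F n m :
  mu_search F n = S (S m) <-> m < n /\ F m = 1 /\ forall i, i < m -> 2 <= F i.
Proof.
  destruct (mu_search_cases F n) as [[Hs Hall]|[m' [Hm' [HF' [Hall Hs]]]]];
    rewrite Hs; split.
  - discriminate.
  - intros [Hm [HFm _]]. specialize (Hall m Hm); lia.
  - destruct (F m') as [|[|z]] eqn:EF; try lia. intros E; injection E as <-; auto.
  - intros [Hm [HFm Hbelow]].
    destruct (Nat.lt_total m m') as [Hlt|[<-|Hlt]].
    + specialize (Hall m Hlt); lia.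
    + rewrite HFm; reflexivity.
    + specialize (Hbelow m' Hlt); lia.
Qed.

Arguments mu_search : simpl never.

(* [clocked_eval t e v] is [S y] if [e] halts on [v] with output [y] when every
   unbounded search is cut off after [t + 1] candidates, and [0] otherwise. *)
Fixpoint clocked_eval (t : nat) {k} (e : PR k) (v : list nat) {struct e} : nat :=
  match e with
  | PRzero _ => 1
  | PRsucc => S (S (hd 0 v))
  | PRproj _ i => S (nth i v 0)
  | PRcomp _ _ f gs =>
      if forallb (Nat.ltb 0) (clocked_evals t gs v)
      then clocked_eval t f (map pred (clocked_evals t gs v)) else 0
  | PRrec _ g h =>
      match v with
      | [] => 0
      | n :: w => nat_rec (fun _ => nat) (clocked_eval t g w)
          (fun j z => match z with 0 => 0 | S z' => clocked_eval t h (j :: z' :: w) end) n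
      end
  | PRmu _ f => pred (mu_search (fun j => clocked_eval t f (j :: v)) (S t))
  end
with clocked_evals (t : nat) {k m} (gs : PRs k m) (v : list nat) {struct gs} : list nat :=
  match gs with
  | PRnil _ => []
  | PRcons _ _ g gs => clocked_eval t g v :: clocked_evals t gs v
  end.

Scheme PR_ind2 := Induction for PR Sort Prop
  with PRs_ind2 := Induction for PRs Sort Prop.
Combined Scheme PR_PRs_ind from PR_ind2, PRs_ind2.

Lemma clocked_eval_sound_all :
  (forall k (e : PR k) t v y, clocked_eval t e v = S y -> eval k e v y) /\
  (forall k m (gs : PRs k m) t v, forallb (Nat.ltb 0) (clocked_evals t gs v) = true ->
     evals k m gs v (map pred (clocked_evals t gs v))).
Proof.
  apply (PR_PRs_ind
    (fun k e => forall t v y, clocked_eval t e v = S y -> eval k e v y)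
    (fun k m gs => forall t v, forallb (Nat.ltb 0) (clocked_evals t gs v) = true ->
       evals k m gs v (map pred (clocked_evals t gs v)))); simpl.
  - intros k t v y H. injection H as <-. constructor.
  - intros t v y H. injection H as <-. constructor.
  - intros k i t v y H. injection H as <-. constructor.
  - intros k m f IHf gs IHgs t v y H.
    destruct (forallb _ (clocked_evals t gs v)) eqn:E; [|discriminate].
    econstructor; [apply (IHgs t); auto | apply (IHf t); auto].
  - intros k g IHg h IHh t [|n w] y H; [discriminate|].
    revert y H; induction n; simpl; intros y H.
    + constructor. eapply IHg; eauto.
    + destruct (nat_rec _ _ _ n) as [|z] eqn:E; [discriminate|].
      econstructor; [apply IHn; reflexivity | eapply IHh; eauto].
  - intros k f IHf t v y H.
    destruct (mu_search (fun j => clocked_eval t f (j :: v)) (S t)) as [|[|n]] eqn:E;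
      simpl in H; try discriminate.
    replace y with n by congruence. apply mu_search_found in E as [_ [HF Hbelow]].
    constructor; [eapply IHf; eauto|].
    intros m Hm. specialize (Hbelow m Hm).
    destruct (clocked_eval t f (m :: v)) as [|[|z]] eqn:Ez; try lia.
    exists z. eapply IHf; eauto.
  - intros. constructor.
  - intros k m g IHg gs IHgs t v H.
    destruct (clocked_eval t g v) as [|c] eqn:E; [discriminate|].
    constructor; [eapply IHg; eauto | apply IHgs; auto].
Qed.

Lemma clocked_eval_sound k (e : PR k) t v y : clocked_eval t e v = S y -> eval k e v y.
Proof. apply clocked_eval_sound_all. Qed.

Lemma eventually_forall_below (P : nat -> nat -> Prop) n :
  (forall i, i < n -> exists t, forall t', t <= t' -> P i t') ->
  exists t, forall t', t <= t' -> forall i, i < n -> P i t'.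
Proof.
  induction n; intros H.
  - exists 0; intros; lia.
  - destruct IHn as [t1 H1]; [intros; apply H; lia|].
    destruct (H n ltac:(lia)) as [t2 H2].
    exists (t1 + t2). intros t' Ht i Hi.
    destruct (Nat.eq_dec i n); [subst; apply H2; lia | apply H1; lia].
Qed.

Fixpoint clocked_eval_complete k e v y (H : eval k e v y) {struct H} :
  exists t, forall t', t <= t' -> clocked_eval t' e v = S y
with clocked_evals_complete k m gs v ws (H : evals k m gs v ws) {struct H} :
  exists t, forall t', t <= t' -> clocked_evals t' gs v = map S ws.
Proof.
  - destruct H.
    + exists 0; reflexivity.
    + exists 0; reflexivity.
    + exists 0; reflexivity.
    + destruct (clocked_evals_complete _ _ _ _ _ H) as [t1 H1].
      destruct (clocked_eval_complete _ _ _ _ H0) as [t2 H2].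
      exists (t1 + t2). intros t' Ht. simpl. rewrite H1 by lia.
      replace (forallb _ (map S ws)) with true by (clear; induction ws; auto).
      rewrite map_map, map_id. apply H2; lia.
    + destruct (clocked_eval_complete _ _ _ _ H) as [t1 H1].
      exists t1. intros t' Ht. apply H1; auto.
    + destruct (clocked_eval_complete _ _ _ _ H) as [t1 H1].
      destruct (clocked_eval_complete _ _ _ _ H0) as [t2 H2].
      exists (t1 + t2). intros t' Ht. simpl.
      specialize (H1 t' ltac:(lia)). simpl in H1. rewrite H1. apply H2; lia.
    + destruct (clocked_eval_complete _ _ _ _ H) as [t1 H1].
      assert (Hbelow : forall i, i < n -> exists t, forall t', t <= t' ->
                 2 <= clocked_eval t' f (i :: v)).
      { intros i Hi. destruct (H0 i Hi) as [z Hz].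
        destruct (clocked_eval_complete _ _ _ _ Hz) as [t2 H2].
        exists t2. intros t' Ht. rewrite H2; auto; lia. }
      destruct (eventually_forall_below _ _ Hbelow) as [t2 H2].
      exists (t1 + t2 + n). intros t' Ht. simpl.
      replace (mu_search _ (S t')) with (S (S n)); [reflexivity|].
      symmetry; apply mu_search_found.
      repeat split; [lia | apply H1; lia | intros i Hi; apply H2; auto; lia].
  - destruct H.
    + exists 0; reflexivity.
    + destruct (clocked_eval_complete _ _ _ _ H) as [t1 H1].
      destruct (clocked_evals_complete _ _ _ _ _ H0) as [t2 H2].
      exists (t1 + t2). intros t' Ht. simpl. rewrite H1, H2 by lia. reflexivity.
Qed.

Definition clocked_recursive k (e : PR k) : Prop :=
  recursive (S k) (fun l => clocked_eval (hd 0 l) e (tl l)).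

Lemma clocked_recursive_comp k m f gs :
  clocked_recursive m f ->
  recursive_vec (S k) m (fun l => map pred (clocked_evals (hd 0 l) gs (tl l))) ->
  recursive (S k) (fun l =>
    if forallb (Nat.ltb 0) (clocked_evals (hd 0 l) gs (tl l)) then 1 else 0) ->
  clocked_recursive k (PRcomp k m f gs).
Proof.
  intros Hf Hgs Hhalted.
  assert (Hf' := recursive_comp (S k) (S m) _ _ Hf
                   (recursive_vec_cons _ _ _ _ (recursive_hd (S k)) Hgs)).
  eapply recursive_ext; [|apply (recursive_if0 _ _ _ _ Hhalted (recursive_zero _) Hf')].
  intros l _. simpl. destruct (forallb _ _); reflexivity.
Qed.

Lemma clocked_recursive_rec k g h :
  clocked_recursive k g -> clocked_recursive (S (S k)) h ->
  clocked_recursive (S k) (PRrec k g h).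
Proof.
  intros Hg Hh.
  assert (Hstep : recursive (S (S (S k))) (fun u => match nth 1 u 0 with
      | 0 => 0
      | S _ => clocked_eval (nth 2 u 0) h (nth 0 u 0 :: pred (nth 1 u 0) :: skipn 3 u)
      end)).
  { apply recursive_if0; [apply recursive_proj | apply recursive_zero |].
    apply (recursive_comp _ _ _
      (fun u => nth 2 u 0 :: nth 0 u 0 :: pred (nth 1 u 0) :: skipn 3 u) Hh).
    apply recursive_vec_cons; [apply recursive_proj|].
    apply recursive_vec_cons; [apply recursive_proj|].
    apply recursive_vec_cons; [apply recursive_pred, recursive_proj|].
    apply (recursive_vec_skipn k 3). }
  assert (Hargs : recursive_vec (S (S k)) (S (S k))
                    (fun l => nth 1 l 0 :: nth 0 l 0 :: skipn 2 l)).
  { apply recursive_vec_cons; [apply recursive_proj|].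
    apply recursive_vec_cons; [apply recursive_proj|]. apply (recursive_vec_skipn k 2). }
  eapply recursive_ext;
    [|exact (recursive_comp _ _ _ _ (recursive_primrec _ _ _ Hg Hstep) Hargs)].
  intros [|t [|n w]] Hl; try discriminate. simpl.
  clear Hl; induction n; simpl; auto. rewrite IHn.
  match goal with |- match ?z with _ => _ end = _ => destruct z; reflexivity end.
Qed.

Lemma nat_rec_ext (a : nat) (s1 s2 : nat -> nat -> nat) n :
  (forall j acc, s1 j acc = s2 j acc) ->
  nat_rec (fun _ => nat) a s1 n = nat_rec (fun _ => nat) a s2 n.
Proof. intros H. induction n; simpl; auto. rewrite IHn; apply H. Qed.

Lemma clocked_recursive_mu k f :
  clocked_recursive (S k) f -> clocked_recursive k (PRmu k f).
Proof.
  intros Hf.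
  set (F u := clocked_eval (nth 2 u 0) f (nth 0 u 0 :: skipn 3 u)).
  assert (HF : recursive (S (S (S k))) F).
  { apply (recursive_comp _ _ _ (fun u => nth 2 u 0 :: nth 0 u 0 :: skipn 3 u) Hf).
    apply recursive_vec_cons; [apply recursive_proj|].
    apply recursive_vec_cons; [apply recursive_proj|]. apply (recursive_vec_skipn k 3). }
  assert (Hstep : recursive (S (S (S k))) (fun u =>
      match nth 1 u 0 with
      | 0 => 0
      | S _ => match pred (nth 1 u 0) with
               | 0 => match F u with
                      | 0 => 0
                      | S _ => match pred (F u) with 0 => S (S (nth 0 u 0)) | S _ => 1 end
                      end
               | S _ => nth 1 u 0
               end
      end)).
  { apply recursive_if0; [apply recursive_proj | apply recursive_zero |].
    apply recursive_if0; [apply recursive_pred, recursive_proj | | apply recursive_proj].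
    apply recursive_if0; [exact HF | apply recursive_zero |].
    apply recursive_if0; [apply recursive_pred, HF | | apply recursive_const].
    apply recursive_S, recursive_S, recursive_proj. }
  assert (Hargs : recursive_vec (S k) (S (S k))
                    (fun l => S (nth 0 l 0) :: nth 0 l 0 :: skipn 1 l)).
  { apply recursive_vec_cons; [apply recursive_S, recursive_proj|].
    apply recursive_vec_cons; [apply recursive_proj|]. apply (recursive_vec_skipn k 1). }
  eapply recursive_ext; [|exact (recursive_pred _ _ (recursive_comp _ _ _ _
    (recursive_primrec _ _ _ (recursive_const (S k) 1) Hstep) Hargs))].
  intros [|t v] Hl; [discriminate|]. cbv beta.
  change (clocked_eval (hd 0 (t :: v)) (PRmu k f) (tl (t :: v)))
    with (pred (mu_search (fun j => clocked_eval t f (j :: v)) (S t))).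
  f_equal. apply nat_rec_ext. intros j acc. unfold mu_step, F. simpl.
  destruct acc as [|[|a]]; simpl; auto.
  destruct (clocked_eval t f (j :: v)) as [|[|b]]; reflexivity.
Qed.

Lemma clocked_eval_recursive k (e : PR k) : clocked_recursive k e.
Proof.
  revert k e.
  apply (PR_PRs_ind clocked_recursive (fun k m gs =>
    recursive_vec (S k) m (fun l => map pred (clocked_evals (hd 0 l) gs (tl l))) /\
    recursive (S k) (fun l =>
      if forallb (Nat.ltb 0) (clocked_evals (hd 0 l) gs (tl l)) then 1 else 0))).
  - intros k. exact (recursive_const (S k) 1).
  - unfold clocked_recursive. eapply recursive_ext; [|apply recursive_S, recursive_S, (recursive_proj 2 1)].
    intros [|t [|x v]] _; reflexivity.
  - intros k i. unfold clocked_recursive. eapply recursive_ext; [|apply recursive_S, (recursive_proj (S k) (S i))].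
    intros [|t v] Hl; [discriminate | reflexivity].
  - intros k m f IHf gs [IHgs IHhalted]. apply clocked_recursive_comp; auto.
  - intros. apply clocked_recursive_rec; auto.
  - intros. apply clocked_recursive_mu; auto.
  - intros k. split; [apply recursive_vec_nil | exact (recursive_const (S k) 1)].
  - intros k m g IHg gs [IHgs IHhalted]. split.
    + apply recursive_vec_cons; auto. apply recursive_pred; auto.
    + eapply recursive_ext; [|exact (recursive_if0 _ _ _ _ IHg (recursive_zero _) IHhalted)].
      intros l _. simpl. destruct (clocked_eval _ g _); reflexivity.
Qed.

Lemma count_below_le (S : nat -> bool) n : count_below S n <= n.
Proof. induction n; simpl; auto. destruct (S n); lia. Qed.

Lemma count_below_subset (S1 S2 : nat -> bool) n :
  subset S1 S2 -> count_below S1 n <= count_below S2 n.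
Proof.
  intros H. induction n; simpl; auto.
  destruct (S1 n) eqn:E; [rewrite (H n E) | destruct (S2 n)]; lia.
Qed.

Lemma count_below_ext (S1 S2 : nat -> bool) n :
  (forall x, x < n -> S1 x = S2 x) -> count_below S1 n = count_below S2 n.
Proof.
  induction n; simpl; intros H; auto.
  rewrite IHn by (intros; apply H; lia). rewrite H by lia. reflexivity.
Qed.

Lemma count_below_ext_interval (S1 S2 : nat -> bool) m d :
  (forall x, m <= x < m + d -> S1 x = S2 x) ->
  count_below S1 (m + d) + count_below S2 m = count_below S2 (m + d) + count_below S1 m.
Proof.
  induction d; intros H; [rewrite Nat.add_0_r; lia|].
  rewrite Nat.add_succ_r. simpl. rewrite (H (m + d)) by lia.
  specialize (IHd ltac:(intros; apply H; lia)). lia.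
Qed.

Lemma count_below_ltb k n : count_below (fun j => j <? k) n = Nat.min k n.
Proof. induction n; simpl; [lia|]. rewrite IHn. destruct (Nat.ltb_spec n k); lia. Qed.

Lemma count_below_symdiff (A B : nat -> bool) n : subset B A ->
  count_below (symdiff A B) n + count_below B n = count_below A n.
Proof.
  intros H. induction n; simpl; auto. unfold symdiff at 2.
  destruct (B n) eqn:EB; [rewrite (H n EB)|]; destruct (A n); simpl; lia.
Qed.

Definition stage (e : PR 1) (s x : nat) : bool := negb (clocked_eval s e [x] =? 0).

Lemma recursive_stage K e gs gx : recursive K gs -> recursive K gx ->
  recursive K (fun v => if stage e (gs v) (gx v) then 1 else 0).
Proof.
  intros Hs Hx.
  assert (He : recursive K (fun v => clocked_eval (gs v) e [gx v])).
  { apply (recursive_comp K 2 _ (fun v => [gs v; gx v]) (clocked_eval_recursive 1 e)).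
    repeat apply recursive_vec_cons; auto. apply recursive_vec_nil. }
  eapply recursive_ext;
    [|exact (recursive_if0 K _ _ _ He (recursive_const K 0) (recursive_const K 1))].
  intros v _. unfold stage. destruct (clocked_eval _ e _); reflexivity.
Qed.

Lemma recursive_count_stage K e gs gn : recursive K gs -> recursive K gn ->
  recursive K (fun v => count_below (stage e (gs v)) (gn v)).
Proof.
  intros Hs Hn. apply (recursive_comp2 K (fun l => count_below (stage e (nth 1 l 0)) (hd 0 l)));
    auto.
  eapply recursive_ext; [|apply (recursive_primrec 1 (fun _ => 0)
      (fun u => nth 1 u 0 + (if stage e (nth 2 u 0) (nth 0 u 0) then 1 else 0)))].
  - intros [|n [|s [|]]] Hl; try discriminate. simpl. clear Hl; induction n; simpl; auto.
  - apply recursive_const.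
  - apply recursive_add; [apply recursive_proj|]. apply recursive_stage; apply recursive_proj.
Qed.

Section Enumeration.

Variables (A : nat -> bool) (e : PR 1).
Hypothesis domain_e : forall n, A n = true <-> exists y, eval 1 e [n] y.

Lemma stage_subset s : subset (stage e s) A.
Proof.
  intros x H. unfold stage in H. destruct (clocked_eval s e [x]) as [|y] eqn:E; [discriminate|].
  apply domain_e. exists y. apply (clocked_eval_sound _ e s). auto.
Qed.

Lemma count_stage_eventually n :
  exists T, forall s, T <= s -> count_below (stage e s) n = count_below A n.
Proof.
  induction n as [|n [T1 H1]]; [exists 0; reflexivity|].
  destruct (A n) eqn:EA.
  - destruct (proj1 (domain_e n) EA) as [y Hy].
    destruct (clocked_eval_complete _ _ _ _ Hy) as [T2 H2].
    exists (T1 + T2). intros s Hs. simpl. rewrite H1 by lia.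
    unfold stage at 1. rewrite H2, EA by lia. reflexivity.
  - exists T1. intros s Hs. simpl. rewrite H1 by lia. rewrite EA.
    destruct (stage e s n) eqn:E; auto.
    rewrite (stage_subset s n E) in EA. discriminate.
Qed.

End Enumeration.

Section Blocks.

Variable block_end : nat -> nat -> nat.
Hypothesis block_end_large : forall k m, S k * S m <= block_end k m.

Fixpoint block_start k :=
  match k with 0 => 0 | S k => block_end k (block_start k) end.

Definition block_index x := count_below (fun j => block_start (S j) <=? x) x.

Lemma block_start_lt_succ k : block_start k < block_start (S k).
Proof. simpl. specialize (block_end_large k (block_start k)). nia. Qed.

Lemma block_start_ge k : k <= block_start k.
Proof. induction k; [lia|]. specialize (block_start_lt_succ k). lia. Qed.

Lemma block_start_lt j k : j < k -> block_start j < block_start k.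
Proof.
  induction 1; [apply block_start_lt_succ|]. specialize (block_start_lt_succ m). lia.
Qed.

Lemma block_start_le j k : j <= k -> block_start j <= block_start k.
Proof.
  intros H. destruct (Nat.eq_dec j k); [subst; lia|].
  apply Nat.lt_le_incl, block_start_lt. lia.
Qed.

Lemma block_index_eq k x :
  block_start k <= x < block_start (S k) -> block_index x = k.
Proof.
  intros Hx. unfold block_index.
  rewrite (count_below_ext _ (fun j => j <? k)), count_below_ltb.
  - specialize (block_start_ge k). lia.
  - intros j Hj. destruct (Nat.ltb_spec j k).
    + apply Nat.leb_le. specialize (block_start_le (S j) k ltac:(lia)). lia.
    + apply Nat.leb_gt. specialize (block_start_le (S k) (S j) ltac:(lia)). lia.
Qed.

Definition glue (F : nat -> nat -> bool) x := F (block_index x) x.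

Lemma count_below_glue F k :
  count_below (F k) (block_start (S k)) <=
  count_below (glue F) (block_start (S k)) + block_start k.
Proof.
  specialize (block_start_lt_succ k).
  set (m := block_start k); set (n := block_start (S k)); intros Hmn.
  replace n with (m + (n - m)) by lia.
  assert (Hsplit := count_below_ext_interval (glue F) (F k) m (n - m)).
  specialize (count_below_le (F k) m).
  enough (forall x, m <= x < m + (n - m) -> glue F x = F k x) by (specialize (Hsplit H); lia).
  intros x Hx. unfold glue. rewrite (block_index_eq k x); unfold m, n in *; auto; lia.
Qed.

Hypothesis block_end_recursive : recursive 2 (fun l => block_end (nth 0 l 0) (nth 1 l 0)).

Lemma recursive_block_start : recursive 1 (fun l => block_start (hd 0 l)).
Proof.
  eapply recursive_ext; [|apply (recursive_primrec 0 (fun _ => 0)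
     (fun u => block_end (nth 0 u 0) (nth 1 u 0)))].
  - intros [|n [|]] Hl; try discriminate. clear Hl. simpl.
    induction n; simpl; congruence.
  - apply recursive_const.
  - exact block_end_recursive.
Qed.

Lemma recursive_block_index : recursive 1 (fun l => block_index (hd 0 l)).
Proof.
  assert (Hcount : recursive 2 (fun l =>
            count_below (fun j => block_start (S j) <=? nth 1 l 0) (nth 0 l 0))).
  { eapply recursive_ext; [|apply (recursive_primrec 1 (fun _ => 0) (fun u =>
       nth 1 u 0 + match block_start (S (nth 0 u 0)) - nth 2 u 0 with 0 => 1 | S _ => 0 end))].
    - intros [|n [|x [|]]] Hl; try discriminate. clear Hl. simpl.
      induction n; simpl; auto. rewrite IHn. f_equal.
      set (s := block_end n (block_start n)).
      destruct (Nat.leb_spec s x); destruct (s - x) eqn:E; lia.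
    - apply recursive_const.
    - apply recursive_add; [apply recursive_proj|].
      apply recursive_if0; try apply recursive_const.
      apply recursive_sub; [|apply recursive_proj].
      apply (recursive_comp1 3 (fun l => block_start (hd 0 l))); [apply recursive_block_start|].
      apply recursive_S, recursive_proj. }
  eapply recursive_ext; [|exact (recursive_comp2 1 _ _ _ Hcount (recursive_hd 1) (recursive_hd 1))].
  reflexivity.
Qed.

End Blocks.

Local Open Scope R_scope.

Lemma rho_nonneg S n : 0 <= rho S n.
Proof.
  unfold rho, Rdiv. destruct n; [simpl; rewrite Rinv_0; lra|].
  apply Rmult_le_pos; [apply pos_INR | apply Rlt_le, Rinv_0_lt_compat, lt_0_INR; lia].
Qed.

Lemma rho_subset (S1 S2 : nat -> bool) n : subset S1 S2 -> rho S1 n <= rho S2 n.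
Proof.
  intros H. unfold rho, Rdiv. destruct n; [simpl; rewrite Rinv_0; lra|].
  apply Rmult_le_compat_r; [apply Rlt_le, Rinv_0_lt_compat, lt_0_INR; lia|].
  apply le_INR, count_below_subset; auto.
Qed.

Lemma rho_symdiff (A B : nat -> bool) n : subset B A ->
  rho (symdiff A B) n = rho A n - rho B n.
Proof.
  intros H. unfold rho. rewrite <- (count_below_symdiff A B n H), plus_INR.
  unfold Rdiv. ring.
Qed.

Lemma cleared_le_iff (cn n a b c k : nat) : (0 < n)%nat ->
  ((a * n * S k <= cn * S c * S k + b * n * S k + n * S c)%nat <->
   (INR a - INR b) / INR (S c) - / INR (S k) <= INR cn / INR n).
Proof.
  intros Hn0.
  assert (Hn : 0 < INR n) by (apply lt_0_INR; lia).
  assert (Hc : 0 < INR (S c)) by (apply lt_0_INR; lia).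
  assert (Hk : 0 < INR (S k)) by (apply lt_0_INR; lia).
  set (D := INR n * INR (S c) * INR (S k)).
  assert (HD : 0 < D) by (unfold D; apply Rmult_lt_0_compat; [apply Rmult_lt_0_compat|]; lra).
  set (num := INR cn * INR (S c) * INR (S k) + INR b * INR n * INR (S k) + INR n * INR (S c)
              - INR a * INR n * INR (S k)).
  assert (Hdiff : INR cn / INR n - ((INR a - INR b) / INR (S c) - / INR (S k)) = num / D).
  { unfold num, D. field. repeat split; lra. }
  assert (Hnum : (a * n * S k <= cn * S c * S k + b * n * S k + n * S c)%nat <-> 0 <= num).
  { unfold num. split; intros H.
    - apply le_INR in H. rewrite !plus_INR, !mult_INR in H. lra.
    - apply INR_le. rewrite !plus_INR, !mult_INR. lra. }
  rewrite Hnum.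
  assert (Hsign : 0 <= num <-> 0 <= num / D).
  { split; intros H; [apply Rdiv_le_0_compat; lra|].
    replace num with (num / D * D) by (field; lra). apply Rmult_le_pos; lra. }
  rewrite Hsign. lra.
Qed.

Lemma subset_attaining_upper_density (A B : nat -> bool) (r : R) :
  subset B A -> is_LimSup_seq (fun n => rho A (S n)) r ->
  (forall eps, 0 < eps -> forall N, exists n, (N <= n)%nat /\ r - eps < rho B (S n)) ->
  is_LimSup_seq (fun n => rho B (S n)) r /\
  is_LimInf_seq (fun n => rho (symdiff A B) (S n)) 0.
Proof.
  intros Hsub HA Hoften. split; intros eps; split.
  - apply Hoften, cond_pos.
  - destruct (proj2 (HA eps)) as [N HN]. exists N. intros n Hn.
    specialize (HN n Hn). specialize (rho_subset B A (S n) Hsub). lra.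
  - intros N.
    assert (Heps2 : 0 < eps / 2) by (specialize (cond_pos eps); lra).
    destruct (proj2 (HA (mkposreal _ Heps2))) as [T HT].
    destruct (Hoften (eps / 2) Heps2 (N + T)%nat) as [n [Hn Hrho]].
    exists n. split; [lia|]. specialize (HT n ltac:(lia)). simpl in HT.
    rewrite rho_symdiff by auto. lra.
  - exists 0%nat. intros n _. specialize (rho_nonneg (symdiff A B) (S n)).
    specialize (cond_pos eps). lra.
Qed.

Local Open Scope nat_scope.

Fixpoint prod_below (f : nat -> nat) j :=
  match j with 0 => 1 | S j => prod_below f j * f j end.

Lemma prod_below_eq0 f j : prod_below f j = 0 <-> exists n, n < j /\ f n = 0.
Proof.
  induction j as [|j IH]; simpl.
  - split; [discriminate | intros [n [Hn _]]; lia].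
  - rewrite Nat.eq_mul_0, IH. split.
    + intros [[n [Hn Hf]]|Hf]; [exists n | exists j]; split; auto; lia.
    + intros [n [Hn Hf]]. destruct (Nat.eq_dec n j); [subst; auto | left; exists n; split; auto; lia].
Qed.

Lemma recursive_prod_below K F : recursive (S K) F ->
  recursive (S K) (fun l => prod_below (fun n => F (n :: tl l)) (hd 0 l)).
Proof.
  intros HF.
  assert (Hstep : recursive (S (S K)) (fun u => nth 1 u 0 * F (nth 0 u 0 :: skipn 2 u))).
  { apply recursive_mul; [apply recursive_proj|].
    apply (recursive_comp _ _ _ (fun u => nth 0 u 0 :: skipn 2 u) HF).
    apply recursive_vec_cons; [apply recursive_proj | exact (recursive_vec_skipn K 2)]. }
  eapply recursive_ext; [|exact (recursive_primrec K _ _ (recursive_const _ 1) Hstep)].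
  intros [|n w] Hl; [discriminate|]. simpl. clear Hl.
  induction n; simpl; congruence.
Qed.

Definition uncurry2 (f : nat -> nat -> nat) (l : list nat) := f (nth 0 l 0) (nth 1 l 0).

(* Search first for [N] such that some [n <= N] is a zero, then for that [n]. *)
Lemma recursive_double_search (D : nat -> nat -> nat -> nat -> nat) :
  recursive 4 (fun l => D (nth 0 l 0) (nth 1 l 0) (nth 2 l 0) (nth 3 l 0)) ->
  (forall k m, exists N n, n <= N /\ D k m N n = 0) ->
  exists F G, (forall k m, D k m (F k m) (G k m) = 0) /\
              recursive 2 (uncurry2 F) /\ recursive 2 (uncurry2 G).
Proof.
  intros HD Hex.
  assert (Hbounded : recursive 3 (fun l =>
            prod_below (fun n => D (nth 1 l 0) (nth 2 l 0) (nth 0 l 0) n) (S (nth 0 l 0)))).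
  { assert (HDn : recursive 4 (fun l => D (nth 1 l 0) (nth 2 l 0) (nth 3 l 0) (nth 0 l 0))).
    { apply (recursive_comp 4 4 _ (fun l => [nth 1 l 0; nth 2 l 0; nth 3 l 0; nth 0 l 0]) HD).
      repeat apply recursive_vec_cons; try apply recursive_proj. apply recursive_vec_nil. }
    apply (recursive_comp 3 4 _ (fun l => [S (nth 0 l 0); nth 1 l 0; nth 2 l 0; nth 0 l 0])
             (recursive_prod_below 3 _ HDn)).
    repeat apply recursive_vec_cons; try apply recursive_proj; [|apply recursive_vec_nil].
    apply recursive_S, recursive_proj. }
  destruct (recursive_mu 2 _ Hbounded) as [g [Hg Hgzero]].
  { intros [|k [|m [|]]] Hl; try discriminate. destruct (Hex k m) as [N [n [Hn HDz]]].
    exists N. apply prod_below_eq0. exists n; simpl; split; [lia | exact HDz]. }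
  set (F k m := g [k; m]).
  assert (HF : recursive 2 (uncurry2 F)).
  { eapply recursive_ext; [|exact Hg]. intros [|k [|m [|]]] Hl; try discriminate; reflexivity. }
  assert (HDF : recursive 3 (fun l => D (nth 1 l 0) (nth 2 l 0) (F (nth 1 l 0) (nth 2 l 0)) (nth 0 l 0))).
  { apply (recursive_comp 3 4 _ (fun l => [nth 1 l 0; nth 2 l 0;
             uncurry2 F [nth 1 l 0; nth 2 l 0]; nth 0 l 0]) HD).
    repeat apply recursive_vec_cons; try apply recursive_proj; [|apply recursive_vec_nil].
    apply (recursive_comp 3 2 _ (fun l => [nth 1 l 0; nth 2 l 0]) HF).
    repeat apply recursive_vec_cons; try apply recursive_proj. apply recursive_vec_nil. }
  destruct (recursive_mu 2 _ HDF) as [h [Hh Hhzero]].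
  { intros [|k [|m [|]]] Hl; try discriminate.
    destruct (proj1 (prod_below_eq0 _ _) (Hgzero [k; m] Hl)) as [n [_ Hn]].
    exists n. exact Hn. }
  exists F, (fun k m => h [k; m]). split; [|split; auto].
  - intros k m. exact (Hhzero [k; m] eq_refl).
  - eapply recursive_ext; [|exact Hh]. intros [|k [|m [|]]] Hl; try discriminate; reflexivity.
Qed.

Lemma computable_fun_recursive (f : nat -> nat) :
  computable_fun f -> recursive 1 (fun l => f (hd 0 l)).
Proof. intros [e He]. exists e. intros [|n [|]] Hl; try discriminate. apply He. Qed.

Lemma recursive_computable_set (B : nat -> bool) :
  recursive 1 (fun l => if B (hd 0 l) then 1 else 0) -> computable_set B.
Proof. intros [e He]. exists e. intros n. exact (He [n] eq_refl). Qed.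

Lemma Rdiv_le_Rinv x y z : (0 < y -> 0 < z -> x * z <= y -> x / y <= / z)%R.
Proof.
  intros Hy Hz H.
  assert (E : (x / y - / z = (x * z - y) * / (y * z))%R) by (field; lra).
  assert (0 < / (y * z))%R by (apply Rinv_0_lt_compat; nra).
  assert ((x * z - y) * / (y * z) <= 0)%R by nra. lra.
Qed.

Section Construction.

Variables (A : nat -> bool) (e : PR 1) (a b c : nat -> nat) (q : nat -> R) (r : R).
Hypothesis domain_e : forall n, A n = true <-> exists y, eval 1 e [n] y.
Hypothesis q_eq : forall n, q n = ((INR (a n) - INR (b n)) / INR (S (c n)))%R.
Hypothesis q_lim : is_lim_seq q r.
Hypothesis upper_density_A : is_LimSup_seq (fun n => rho A (S n)) r.

(* By truncated subtraction, [defect k m N n = 0] says: stage [N] is late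
   enough ([k, n <= N]), block [k] starting at [m] may end at [n], and on
   [[0, n)] the stage-[N] approximation of [A] already has density at least
   [q N - 1/(k+1)]. *)
Definition defect k m N n : nat :=
  (k - N) + (n - N) + (S k * S m - n) +
  (a N * n * S k - (count_below (stage e N) n * S (c N) * S k + b N * n * S k + n * S (c N))).

Lemma defect_eq0 k m N n : defect k m N n = 0 <->
  k <= N /\ n <= N /\ S k * S m <= n /\ (q N - / INR (S k) <= rho (stage e N) n)%R.
Proof.
  unfold defect, rho. rewrite q_eq. split.
  - intros H. repeat split; try lia. apply cleared_le_iff; nia.
  - intros [Hk [Hn [Hmn Hrho]]]. apply cleared_le_iff in Hrho; nia.
Qed.

Lemma defect_recursive : computable_fun a -> computable_fun b -> computable_fun c ->
  recursive 4 (fun l => defect (nth 0 l 0) (nth 1 l 0) (nth 2 l 0) (nth 3 l 0)).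
Proof.
  intros Ha Hb Hc. unfold defect.
  assert (HN := recursive_proj 4 2). assert (Hn := recursive_proj 4 3).
  assert (HaN := recursive_comp1 4 _ _ (computable_fun_recursive a Ha) HN).
  assert (HbN := recursive_comp1 4 _ _ (computable_fun_recursive b Hb) HN).
  assert (HcN := recursive_comp1 4 _ _ (computable_fun_recursive c Hc) HN).
  assert (Hcount := recursive_count_stage 4 e _ _ HN Hn). simpl in HaN, HbN, HcN.
  repeat first [ apply recursive_add | apply recursive_sub | apply recursive_mul
               | apply recursive_S | apply recursive_proj | assumption ].
Qed.

Lemma good_block_exists k m : exists N n, n <= N /\ defect k m N n = 0.
Proof.
  assert (Hk : (0 < INR (S k))%R) by (apply lt_0_INR; lia).
  assert (Heps : (0 < / (2 * INR (S k)))%R) by (apply Rinv_0_lt_compat; lra).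
  set (eps := mkposreal _ Heps).
  destruct (proj1 (upper_density_A eps) (S k * S m)) as [j [Hj Hrho]].
  destruct (count_stage_eventually A e domain_e (S j)) as [T1 HT1].
  destruct (proj2 (is_lim_seq_spec q r) q_lim eps) as [T2 HT2].
  set (N := T1 + T2 + k + S j).
  exists N, (S j). split; [unfold N; lia|]. apply defect_eq0.
  repeat split; try (unfold N; lia).
  specialize (HT2 N ltac:(unfold N; lia)). apply Rabs_def2 in HT2.
  unfold rho in *. rewrite HT1 by (unfold N; lia).
  assert (E : (/ INR (S k) = 2 * / (2 * INR (S k)))%R) by (field; lra).
  unfold eps in *; cbn [pos] in Hrho, HT2. rewrite E. lra.
Qed.

Section Glued.

Variables stage_of block_end : nat -> nat -> nat.
Hypothesis defect_blocks : forall k m, defect k m (stage_of k m) (block_end k m) = 0.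

Lemma block_end_large k m : S k * S m <= block_end k m.
Proof. apply (defect_eq0 k m (stage_of k m)), defect_blocks. Qed.

Definition glued_set : nat -> bool :=
  glue block_end (fun k => stage e (stage_of k (block_start block_end k))).

Lemma glued_set_subset : subset glued_set A.
Proof. intros x. apply stage_subset, domain_e. Qed.

Lemma glued_set_computable :
  recursive 2 (uncurry2 stage_of) -> recursive 2 (uncurry2 block_end) ->
  computable_set glued_set.
Proof.
  intros Hstage Hend. apply recursive_computable_set.
  assert (Hidx := recursive_block_index block_end Hend).
  assert (Hstart := recursive_comp1 1 _ _ (recursive_block_start block_end Hend) Hidx).
  apply recursive_stage; [|apply recursive_hd].
  exact (recursive_comp2 1 _ _ _ Hstage Hidx Hstart).
Qed.

Lemma glued_set_dense_often eps : (0 < eps)%R -> forall N0,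
  exists n, N0 <= n /\ (r - eps < rho glued_set (S n))%R.
Proof.
  intros Heps N0.
  assert (Heps2 : (0 < eps / 2)%R) by lra.
  destruct (proj2 (is_lim_seq_spec q r) q_lim (mkposreal _ Heps2)) as [T HT].
  destruct (archimed_cor1 (eps / 4) ltac:(lra)) as [K [HK HK0]].
  set (k := N0 + T + K).
  set (m := block_start block_end k); set (n := block_start block_end (S k)).
  set (N := stage_of k m).
  destruct (proj1 (defect_eq0 k m N n) (defect_blocks k m)) as [HkN [_ [Hmn Hrho]]].
  exists (pred n). split; [specialize (block_start_ge _ block_end_large (S k)); unfold k, n in *; lia|].
  replace (S (pred n)) with n by lia.
  assert (Hcount := count_below_glue block_end block_end_large
                      (fun k => stage e (stage_of k (block_start block_end k))) k).
  change (count_below (stage e N) n <= count_below glued_set n + m) in Hcount.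
  apply le_INR in Hcount. rewrite plus_INR in Hcount.
  assert (Hn : (0 < INR n)%R) by (apply lt_0_INR; lia).
  assert (Hm : (INR m / INR n <= / INR (S k))%R).
  { apply Rdiv_le_Rinv; [lra | apply lt_0_INR; lia|]. rewrite <- mult_INR. apply le_INR. nia. }
  assert (Hk : (/ INR (S k) <= / INR K)%R).
  { apply Rinv_le_contravar; [apply lt_0_INR; lia | apply le_INR; unfold k; lia]. }
  specialize (HT N ltac:(unfold k in HkN; lia)). apply Rabs_def2 in HT. simpl in HT.
  assert (Hsplit : (rho (stage e N) n - rho glued_set n <= INR m / INR n)%R).
  { unfold rho, Rdiv. rewrite <- Rmult_minus_distr_r.
    apply Rmult_le_compat_r; [apply Rlt_le, Rinv_0_lt_compat; lra | lra]. }
  lra.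
Qed.

End Glued.

End Construction.

Theorem mainTheorem9 (A : nat -> bool) :
  ce_set A ->
  (exists r : R, upper_density A = Finite r /\ Delta02 r) ->
  exists B : nat -> bool,
    computable_set B /\ subset B A /\
    upper_density B = upper_density A /\ dens_dist A B = Finite 0.
Proof.
  intros [e domain_e] [r [Hr [q [[a [b [c [Ha [Hb [Hc q_eq]]]]]] q_lim]]]].
  destruct (ex_LimSup_seq (fun n => rho A (S n))) as [l HA].
  unfold upper_density in Hr. rewrite (is_LimSup_seq_unique _ _ HA) in Hr. subst l.
  destruct (recursive_double_search _ (defect_recursive e a b c Ha Hb Hc)
              (good_block_exists A e a b c q r domain_e q_eq q_lim HA))
    as [stage_of [block_end [Hblocks [Hstage Hend]]]].
  set (B := glued_set e stage_of block_end).
  destruct (subset_attaining_upper_density A B r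
              (glued_set_subset A e domain_e stage_of block_end) HA
              (glued_set_dense_often e a b c q r q_eq q_lim stage_of block_end Hblocks))
    as [HB HAB].
  exists B. repeat split.
  - exact (glued_set_computable e stage_of block_end Hstage Hend).
  - exact (glued_set_subset A e domain_e stage_of block_end).
  - unfold upper_density. rewrite (is_LimSup_seq_unique _ _ HA).
    apply is_LimSup_seq_unique, HB.
  - apply is_LimInf_seq_unique, HAB.
Qed.
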